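(* There exists an absolute constant $c>0$ such that the following holds. Let $G$ be an abelian group and let $A,B\subseteq G$ be finite nonempty sets with $|A|=|B|$. Let $\kappa=|A+B|/|A|$. Then for each integer $s\ge1$ there exist subsets $A_{(s)}\subseteq A$ and $B_{(s)}\subseteq B$, each of size at most $s$, such that \[ \max\big(|A+B_{(s)}|,\,|B+A_{(s)}|\big)\ge c\min(\kappa^{1/3},s)\,|A|. \]
   Context: For subsets $X,Y$ of an abelian group, $X+Y=\{x+y:x\in X,y\in Y\}$. *)

From HB Require Import structures.
From mathcomp Require Import all_boot all_algebra.
From mathcomp Require Import finmap.
From Stdlib Require Import Reals.
Set Implicit Arguments. Unset Strict Implicit. Unset Printing Implicit Defensive.

Local Open Scope fset_scope.

Definition sumset (G : zmodType) (X Y : {fset G}) : {fset G} :=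
  [fset GRing.add x y | x in X, y in Y].

From HB Require Import structures.
From mathcomp Require Import all_boot all_algebra.
From mathcomp Require Import finmap zify.

(* Take t <= s maximal with t^3 |A| <= |A+B|; maximality gives
   min(kappa^(1/3), s) <= 2t, so it suffices to find S in B with |S| <= t and
   |A+S| >= t|A|/4, or such an S in A with |B+S| >= t|A|/4.  If there is none,
   adding greedily elements b for which A+b meets A+S in at most 3|A|/4
   points yields S, |S| <= t, with X := A+S small (|X| < t|A|/4) and containing
   more than 3/4 of every translate A+b, b in B; symmetrically a small Y := B+S'
   contains more than 3/4 of every B+a.  Each x = a0 + b0 in A+B is then the
   combination (b + a0) - (b + a) + (a + b0) of elements of Y, Y and X for at
   least 3|A|^2/8 pairs (a, b), and x can be read back from the triple, so
   3|A|^2/8 |A+B| <= |Y|^2 |X| < (t|A|/4)^3 <= |A|^2 |A+B| / 64, absurd. *)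
Set Implicit Arguments. Unset Strict Implicit. Unset Printing Implicit Defensive.
Local Open Scope fset_scope.
Local Open Scope nat_scope.

Section FsetMSep.
Variables (T1 T2 : choiceType) (E : {fset T2}) (P : T1 -> T2 -> bool).

Lemma card_fsetM_sep (C : {fset T1}) :
  #|` [fset q in C `*` E | P q.1 q.2]| = \sum_(x <- C) #|` [fset y in E | P x y]|.
Proof.
elim/fset1U_rect: C => [|x C xC IH].
  by rewrite big_seq_fset0; apply/eqP; rewrite cardfs_eq0; apply/eqP/fsetP=> -[a b]; rewrite !inE.
rewrite big_fsetU1 //= -IH.
set F := [fset (x, y) | y in [fset y in E | P x y]]; set D := [fset q in C `*` E | _].
have -> : [fset q in (x |` C) `*` E | P q.1 q.2] = F `|` D.
  apply/fsetP=> -[a b]; rewrite !inE /=; apply/idP/idP.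
  - case/andP=> /andP[/orP[/eqP ->|aC] bE] Pab; last by rewrite aC bE Pab orbT.
    by apply/orP; left; apply/imfsetP; exists b; rewrite //= !inE bE.
  - case/orP=> [/imfsetP[y /=]|/andP[/andP[-> ->] ->]]; last by rewrite orbT.
    by rewrite !inE => /andP[yE Py] [-> ->]; rewrite eqxx yE Py.
have FD0 : F `&` D = fset0.
  apply/fsetP=> -[a b]; rewrite !inE; apply/negbTE/negP=> /andP[].
  by case/imfsetP=> y _ [-> _] /andP[/andP[aC _] _]; rewrite aC in xC.
have cardF : #|` F| = #|` [fset y in E | P x y]|.
  by apply/eqP/card_in_imfsetP=> u v _ _ [].
by rewrite -cardF -cardfsUI FD0 cardfs0 addn0.
Qed.

Lemma leq_card_fsetM_sep (C : {fset T1}) k K :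
  (forall x, x \in C -> K <= k * #|` [fset y in E | P x y]|) ->
  #|` C| * K <= k * #|` [fset q in C `*` E | P q.1 q.2]|.
Proof.
move=> fibreK; rewrite card_fsetM_sep big_distrr [#|` C|]card_fset_sum1 big_distrl /=.
by rewrite !big_seq; apply: leq_sum => x xC; rewrite mul1n fibreK.
Qed.

End FsetMSep.

Lemma card_fsetM (T1 T2 : choiceType) (C : {fset T1}) (E : {fset T2}) :
  #|` C `*` E| = #|` C| * #|` E|.
Proof.
have -> : C `*` E = [fset q in C `*` E | true] by apply/fsetP=> q; rewrite !inE andbT.
rewrite (card_fsetM_sep _ (fun _ _ => true)) [#|` C|]card_fset_sum1 big_distrl /=.
apply: eq_bigr => x _; rewrite mul1n; congr #|` _|.
by apply/fsetP=> y; rewrite !inE andbT.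
Qed.

Lemma card_fset_sepC (T : choiceType) (A : {fset T}) (p : pred T) :
  #|` [fset a in A | p a]| + #|` [fset a in A | ~~ p a]| = #|` A|.
Proof.
rewrite -cardfsUI.
have -> : [fset a in A | p a] `|` [fset a in A | ~~ p a] = A.
  by apply/fsetP=> a; rewrite !inE; case: (p a); rewrite ?andbT ?andbF ?orbF.
have -> : [fset a in A | p a] `&` [fset a in A | ~~ p a] = fset0.
  by apply/fsetP=> a; rewrite !inE; case: (p a); rewrite ?andbF ?andbT.
by rewrite cardfs0 addn0.
Qed.

Lemma card_fset_sepI (T : choiceType) (B : {fset T}) (p q : pred T) :
  #|` [fset b in B | p b]| + #|` [fset b in B | q b]| <=
  #|` [fset b in B | p b && q b]| + #|` B|.
Proof.
rewrite -cardfsUI addnC leq_add //; apply: fsubset_leq_card; apply/fsubsetP=> b.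
  by rewrite !inE => /and3P[/andP[-> ->] _ ->].
by rewrite !inE => /orP[/andP[]|/andP[]].
Qed.

Lemma card_fset_sep_large (T : choiceType) (A : {fset T}) (p : pred T) :
  4 * #|` [fset a in A | ~~ p a]| < #|` A| -> 3 * #|` A| < 4 * #|` [fset a in A | p a]|.
Proof. by have := card_fset_sepC A p; lia. Qed.

Lemma cube_cover_contra t n m x y : t ^ 3 * n <= m ->
  m * (3 * n ^ 2) <= 8 * (y * (y * x)) -> 4 * x < t * n -> 4 * y < t * n -> False.
Proof.
move=> large popular small_x small_y.
have cube : (4 * y) * ((4 * y) * (4 * x)) < (t * n) * ((t * n) * (t * n)).
  by rewrite ltn_mul // ltn_mul.
have := leq_mul large (leqnn (n ^ 2)); move: cube popular; rewrite !expnS expn0; nia.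
Qed.

Section Sumset.
Variable G : zmodType.
Implicit Types (A B S X Y : {fset G}) (a b x : G).

Lemma sumsetP A B x :
  reflect (exists a b, [/\ a \in A, b \in B & x = (a + b)%R]) (x \in sumset A B).
Proof.
apply: (iffP (imfset2P _ _ _ _ _)) => [[a aA [b bB ->]]|[a [b [aA bB ->]]]].
  by exists a, b.
by exists a => //; exists b.
Qed.

Lemma sumset_rep A B : exists r : G -> G * G, forall x, x \in sumset A B ->
  [/\ (r x).1 \in A, (r x).2 \in B & x = ((r x).1 + (r x).2)%R].
Proof.
pose s := enum_fset (A `*` B).
exists (fun x => nth (0, 0)%R s (find (fun p : G * G => p.1 + p.2 == x)%R s)).
move=> _ /sumsetP[a [b [aA bB ->]]].
have has_ab : has (fun p : G * G => p.1 + p.2 == a + b)%R s.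
  by apply/hasP; exists (a, b); rewrite ?eqxx // -[_ \in s]/((a, b) \in A `*` B) in_fsetM aA bB.
have := nth_find (0, 0)%R has_ab; have := mem_nth (0, 0)%R (etrans (esym (has_find _ _)) has_ab).
by rewrite -[_ \in s]/(_ \in A `*` B) in_fsetM => /andP[-> ->] /eqP.
Qed.

Lemma leq_card_sumset A B b : b \in B -> #|` A| <= #|` sumset A B|.
Proof.
move=> bB; have <- : #|` [fset (a + b)%R | a in A]| = #|` A|.
  by apply/eqP/card_in_imfsetP=> u v _ _ /= /GRing.addIr.
apply: fsubset_leq_card; apply/fsubsetP=> _ /imfsetP[a /= aA ->].
by apply/sumsetP; exists a, b.
Qed.

Lemma card_sumset_fset1U A S b :
  #|` sumset A S| + #|` [fset a in A | (a + b)%R \notin sumset A S]|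
  <= #|` sumset A (b |` S)|.
Proof.
set N := [fset a in A | _]; pose I := [fset (a + b)%R | a in N].
have cardI : #|` I| = #|` N|.
  by apply/eqP/card_in_imfsetP=> u v _ _ /= /GRing.addIr.
have disjI : sumset A S `&` I = fset0.
  apply/fsetP=> y; rewrite !inE; apply/negbTE/negP=> /andP[yAS].
  by case/imfsetP=> a /=; rewrite !inE => /andP[_ aN] yab; rewrite -yab yAS in aN.
rewrite -cardI; have := cardfsUI (sumset A S) I; rewrite disjI cardfs0 addn0 => <-.
apply: fsubset_leq_card; apply/fsubsetP=> y; rewrite inE => /orP[].
  case/sumsetP=> a [c [aA cS ->]]; apply/sumsetP; exists a, c.
  by rewrite fset1Ur.
case/imfsetP=> a /=; rewrite !inE => /andP[aA _] ->; apply/sumsetP; exists a, b.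
by rewrite fset1U1.
Qed.

Lemma sumset_greedy_cover A B t : exists2 S, S `<=` B /\ #|` S| <= t &
  t * #|` A| <= 4 * #|` sumset A S| \/
  forall b, b \in B -> 4 * #|` [fset a in A | (a + b)%R \notin sumset A S]| < #|` A|.
Proof.
elim: t => [|t [S [SB St] [large|cover]]].
  by exists fset0; rewrite ?fsub0set ?cardfs0 //; left.
- have [cover|/allPn[b bB /=]] := boolP (all (fun b =>
      4 * #|` [fset a in A | (a + b)%R \notin sumset A S]| < #|` A|) B).
    by exists S; [split; first exact: SB; apply: leqW | right=> b /(allP cover)].
  rewrite -leqNgt => uncovered; exists (b |` S).
    by rewrite fsubUset fsub1set bB SB cardfsU1; case: (b \in S); rewrite /= ?ltnS ?leqW.
  left; rewrite mulSn; apply: leq_trans (leq_mul (leqnn 4) (card_sumset_fset1U A S b)).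
  by rewrite mulnDr addnC leq_add.
- by exists S; [split; first exact: SB; apply: leqW | right].
Qed.

Lemma addr_recover3 a0 b0 a b : (a0 + b0)%R = ((b + a0) - (b + a) + (a + b0))%R.
Proof. by rewrite [(b + a0)%R]GRing.addrC GRing.addrKA GRing.subrKA. Qed.

Section PopularSums.
Variables (A B X Y : {fset G}).
Hypothesis cardAB : #|` A| = #|` B|.
Hypothesis coverX : forall b, b \in B -> 3 * #|` A| < 4 * #|` [fset a in A | (a + b)%R \in X]|.
Hypothesis coverY : forall a, a \in A -> 3 * #|` B| < 4 * #|` [fset b in B | (b + a)%R \in Y]|.

Lemma card_popular_pairs a0 b0 : a0 \in A -> b0 \in B ->
  3 * #|` A| ^ 2 <= 8 * #|` [fset p in A `*` B |
    [&& (p.1 + b0)%R \in X, (p.2 + a0)%R \in Y & (p.2 + p.1)%R \in Y]]|.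
Proof.
move=> a0A b0B; pose C := [fset a in A | (a + b0)%R \in X].
pose P (p : G * G) := ((p.2 + a0)%R \in Y) && ((p.2 + p.1)%R \in Y).
have pairsC : #|` C| * #|` A| <= 2 * #|` [fset p in C `*` B | P p]|.
  apply: (leq_card_fsetM_sep (P := fun a b => P (a, b))) => a; rewrite inE => /andP[aA _].
  have := card_fset_sepI B (fun b => (b + a0)%R \in Y) (fun b => (b + a)%R \in Y).
  have := coverY a0A; have := coverY aA; rewrite /P /= cardAB.
  (* [set] merges convertible copies of the same cardinal, which lia would
     treat as distinct atoms. *)
  set u := #|` [fset b in B | (b + a0)%R \in Y]|; set v := #|` [fset b in B | (b + a)%R \in Y]|.
  set w := #|` [fset b in B | _ && _]|; set n := #|` B|; lia.
have subC : [fset p in C `*` B | P p] `<=` [fset p in A `*` B |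
    [&& (p.1 + b0)%R \in X, (p.2 + a0)%R \in Y & (p.2 + p.1)%R \in Y]].
  by apply/fsubsetP=> -[a b]; rewrite !inE /= => /andP[/andP[/andP[-> ->] ->] /andP[-> ->]].
have := coverX b0B; have := fsubset_leq_card subC; move: pairsC.
rewrite -/C; set m := #|` A|; set c := #|` C|; nia.
Qed.

Lemma card_sumset_popular :
  #|` sumset A B| * (3 * #|` A| ^ 2) <= 8 * (#|` Y| * (#|` Y| * #|` X|)).
Proof.
have [r rP] := sumset_rep A B.
pose P x (p : G * G) :=
  [&& (p.1 + (r x).2)%R \in X, (p.2 + (r x).1)%R \in Y & (p.2 + p.1)%R \in Y].
pose D := [fset q in sumset A B `*` (A `*` B) | P q.1 q.2].
have lower : #|` sumset A B| * (3 * #|` A| ^ 2) <= 8 * #|` D|.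
  by apply: leq_card_fsetM_sep => x /rP[a0A b0B _]; apply: card_popular_pairs.
pose f (q : G * (G * G)) :=
  ((q.2.2 + (r q.1).1)%R, ((q.2.2 + q.2.1)%R, (q.2.1 + (r q.1).2)%R)).
have f_inj : {in D &, injective f}.
  move=> [x [a b]] [x' [a' b']]; rewrite !inE /= => /andP[/andP[xAB _] _].
  move=> /andP[/andP[x'AB _] _] [eY1 eY2 eX].
  have ex : x = x'.
    case: (rP x xAB) => _ _ ->; case: (rP x' x'AB) => _ _ ->.
    by rewrite (addr_recover3 _ _ a b) [in RHS](addr_recover3 _ _ a' b') eY1 eY2 eX.
  by subst x'; rewrite (GRing.addIr _ eX) (GRing.addIr _ eY1).
have upper : #|` D| <= #|` Y `*` (Y `*` X)|.
  move/card_in_imfsetP: f_inj => /eqP <-; apply: fsubset_leq_card; apply/fsubsetP=> y.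
  case/imfsetP=> -[x [a b]]; rewrite !inE => /andP[_ /and3P[inX inY inY']] ->.
  by rewrite /f /= inX inY inY'.
by apply: leq_trans lower _; rewrite !card_fsetM in upper; rewrite leq_mul2l upper orbT.
Qed.

End PopularSums.

Lemma sumset_large_partial A B t : #|` A| = #|` B| -> t ^ 3 * #|` A| <= #|` sumset A B| ->
  (exists2 S, S `<=` B /\ #|` S| <= t & t * #|` A| <= 4 * #|` sumset A S|) \/
  (exists2 S, S `<=` A /\ #|` S| <= t & t * #|` A| <= 4 * #|` sumset B S|).
Proof.
move=> cardAB large.
have [SB SB_small [|coverX]] := sumset_greedy_cover A B t; first by left; exists SB.
have [X_small|] := ltnP (4 * #|` sumset A SB|) (t * #|` A|); last by left; exists SB.
have [SA SA_small [|coverY]] := sumset_greedy_cover B A t; first by right; exists SA; rewrite ?cardAB.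
have [Y_small|] := ltnP (4 * #|` sumset B SA|) (t * #|` B|); last by right; exists SA; rewrite ?cardAB.
exfalso; rewrite -cardAB in Y_small; apply: (cube_cover_contra large _ X_small Y_small).
apply: card_sumset_popular => // [b /coverX | a /coverY]; exact: card_fset_sep_large.
Qed.

End Sumset.

Lemma exists_cube_scale n m s : 0 < n -> n <= m -> 0 < s ->
  exists t, [/\ 0 < t <= s, t ^ 3 * n <= m & t = s \/ m < t.+1 ^ 3 * n].
Proof.
move=> n_gt0 n_le_m s_gt0; pose P t := (t <= s) && (t ^ 3 * n <= m).
have P1 : P 1 by rewrite /P s_gt0 exp1n mul1n.
have P_bound t : P t -> t <= s by case/andP.
have [t /andP[t_le_s t_scale] t_max] := ex_maxnP (ex_intro P 1 P1) P_bound.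
exists t; split=> //; first by rewrite t_le_s (t_max 1 P1).
have [t_lt_s|] := ltnP t s; last by left; apply/eqP; rewrite eqn_leq t_le_s.
right; rewrite ltnNge; apply/negP => scale.
by have := t_max t.+1; rewrite /P t_lt_s scale ltnn => /(_ isT).
Qed.

(* Reals rebinds the [%R] delimiter (used above for ring_scope) and the nat
   notation [^] (hence [expn] below), so it is imported only here. *)
From Stdlib Require Import Reals Lra.

Section RealBounds.
Local Open Scope R_scope.

Lemma INR_expn m k : INR (expn m k) = INR m ^ k.
Proof. by elim: k => [|k IHk]; rewrite ?expnS ?mult_INR ?IHk. Qed.

Lemma Rpower_third_lt x y : 0 < x -> 0 < y -> x < y ^ 3 -> Rpower x (1 / 3) < y.
Proof.
move=> x_gt0 y_gt0 x_lt.
have -> : y = Rpower (y ^ 3) (1 / 3).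
  by rewrite -Rpower_pow // Rpower_mult (_ : INR 3 * (1 / 3) = 1) ?Rpower_1 //=; field.
by apply: Rlt_Rpower_l; lra.
Qed.

Lemma Rmin_cube_root_le n m s t : 0 < n -> 0 < m -> 1 <= t ->
  t = s \/ m < (t + 1) ^ 3 * n -> Rmin (Rpower (m / n) (1 / 3)) s <= 2 * t.
Proof.
move=> n_gt0 m_gt0 t_ge1 [<-|m_lt]; first by apply: Rle_trans (Rmin_r _ _) _; lra.
apply: Rle_trans (Rmin_l _ _) _; apply: Rlt_le; apply: Rlt_le_trans (_ : t + 1 <= 2 * t); last by lra.
apply: Rpower_third_lt; first exact: Rdiv_lt_0_compat; first lra.
apply: (Rmult_lt_reg_r n) => //.
by rewrite /Rdiv Rmult_assoc Rinv_l ?Rmult_1_r //; apply: Rgt_not_eq.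
Qed.
End RealBounds.

Theorem theorem1p2 :
  exists c : R, (0 < c)%R /\
  forall (G : zmodType) (A B : {fset G}),
    A != fset0 -> #|` A| = #|` B| ->
    let kappa := (INR #|` sumset A B| / INR #|` A|)%R in
    forall s : nat, (1 <= s)%N ->
      exists (As Bs : {fset G}),
        [/\ (As `<=` A)%fset, (Bs `<=` B)%fset, (#|` As| <= s)%N, (#|` Bs| <= s)%N &
        (c * Rmin (Rpower kappa (1/3)) (INR s) * INR #|` A|
           <= Rmax (INR #|` sumset A Bs|) (INR #|` sumset B As|))%R].
Proof.
exists (1 / 8)%R; split; first lra.
move=> G A B A_neq0 cardAB kappa s s_gt0.
have n_gt0 : (0 < #|` A|)%N by rewrite cardfs_gt0.
have [b0 b0B] : exists b, b \in B by apply/fset0Pn; rewrite -cardfs_gt0 -cardAB.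
have AB_ge := leq_card_sumset A b0B.
have [t [/andP[t_gt0 t_le_s] t_scale t_max]] := exists_cube_scale n_gt0 AB_ge s_gt0.
have min_le : (Rmin (Rpower kappa (1 / 3)) (INR s) <= 2 * INR t)%R.
  apply: Rmin_cube_root_le.
  - exact/lt_0_INR/ltP.
  - exact/lt_0_INR/ltP/(leq_trans n_gt0).
  - exact/(le_INR 1)/leP.
  case: t_max => [-> | m_lt]; [by left | right].
  by move/ltP/lt_INR: m_lt; rewrite -multE mult_INR INR_expn S_INR.
have scaled (X : {fset G}) : (t * #|` A| <= 4 * #|` X|)%N ->
    (1 / 8 * Rmin (Rpower kappa (1 / 3)) (INR s) * INR #|` A| <= INR #|` X|)%R.
  move=> /leP/le_INR; rewrite -!multE !mult_INR (_ : INR 4 = 4%R) /=; last by lra.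
  have := Rmult_le_compat_r _ _ _ (pos_INR #|` A|) min_le; set n := INR #|` A|; lra.
case: (sumset_large_partial cardAB t_scale) => -[S [S_sub S_t] S_large].
- exists fset0, S; split; rewrite ?fsub0set ?cardfs0 ?(leq_trans S_t) //.
  exact: Rle_trans (scaled _ S_large) (Rmax_l _ _).
- exists S, fset0; split; rewrite ?fsub0set ?cardfs0 ?(leq_trans S_t) //.
  exact: Rle_trans (scaled _ S_large) (Rmax_r _ _).
Qed.
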